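(* Let $D_0=\{(p,u)\in\mathbb{R}^2: p>0,\ u>-1\}$ and for $n\ge1$ let $D_n=\Phi^{-1}(D_{n-1})\cap D_0$, where $\Phi^{-1}(D)=\{(p,u): p\ne0,\ \Phi(p,u)\in D\}$. Then for every $n\ge0$ the set $D_n$ is convex.
   Context: $\Phi$ is the partial map of $\mathbb{R}^2$ defined for $p\ne0$ by $\Phi(p,u)=\bigl(p^2(u+1)-1,\ 1/p\bigr)$. *)

From Stdlib Require Import Reals.
Open Scope R_scope.

Definition Phi (z : R * R) : R * R :=
  let (p, u) := z in (p ^ 2 * (u + 1) - 1, / p).

Definition Phi_preimage (D : R * R -> Prop) : R * R -> Prop :=
  fun z => fst z <> 0 /\ D (Phi z).

Definition D0 : R * R -> Prop := fun z => 0 < fst z /\ -1 < snd z.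

Fixpoint Dn (n : nat) : R * R -> Prop :=
  match n with
  | O => D0
  | S m => fun z => Phi_preimage (Dn m) z /\ D0 z
  end.

Definition convex_set (S : R * R -> Prop) : Prop :=
  forall x y : R * R, S x -> S y -> forall t : R, 0 <= t <= 1 ->
    S (t * fst x + (1 - t) * fst y, t * snd x + (1 - t) * snd y).

(* Order points by (p, u) <= (p', u') iff p <= p' and p (u + 1) <= p' (u' + 1).
   On D_0 the map Phi is monotone for this order, so every D_n is an up-set.
   Convexity then propagates along D_n = Phi^{-1}(D_{n-1}) /\ D_0 because Phi
   maps a point z of a segment [z1, z2] of D_0 above some point of the segment
   [Phi z1, Phi z2]: with mu = t p1 / p, the number 1/p is the mu-mean of 1/p1
   and 1/p2, so Phi z and the mu-mean of the images share their second
   coordinate; if the first coordinate of Phi z is the smaller one, a cubic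
   mean inequality shows that Phi z lies above the image of the endpoint with
   the smaller p. *)

From Stdlib Require Import Reals Lra Psatz.
Open Scope R_scope.

Definition dominated (z z' : R * R) : Prop :=
  fst z <= fst z' /\ fst z * (snd z + 1) <= fst z' * (snd z' + 1).

Definition up_closed (S : R * R -> Prop) : Prop :=
  forall z z', S z -> dominated z z' -> S z'.

Definition comb (t : R) (z1 z2 : R * R) : R * R :=
  (t * fst z1 + (1 - t) * fst z2, t * snd z1 + (1 - t) * snd z2).

Lemma comb_swap (t : R) (z1 z2 : R * R) : comb t z1 z2 = comb (1 - t) z2 z1.
Proof. unfold comb; f_equal; ring. Qed.

Lemma D0_up_closed : up_closed D0.
Proof.
  intros [p u] [p' u'] [hp hu] [hle hw]; cbn [fst snd] in *.
  split; cbn [fst snd]; [lra | nra].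
Qed.

Lemma D0_convex : convex_set D0.
Proof.
  intros [p1 u1] [p2 u2] [hp1 hu1] [hp2 hu2] t ht; cbn [fst snd] in *.
  split; cbn [fst snd].
  - destruct (Rle_dec p1 p2); nra.
  - destruct (Rle_dec u1 u2); nra.
Qed.

Lemma Phi_monotone (z z' : R * R) :
  D0 z -> dominated z z' -> dominated (Phi z) (Phi z').
Proof.
  destruct z as [p u], z' as [p' u']; intros [hp hu] [hle hw]; cbn [fst snd] in *.
  set (w := p * (u + 1)) in *; set (w' := p' * (u' + 1)) in *.
  assert (hw0 : 0 < w) by (unfold w; nra).
  assert (hinv : / p' <= / p) by (apply Rinv_le_contravar; lra).
  (* In the coordinates (p, w), Phi z = (s, 1 / p) with s = p w - 1 and
     s (1 / p + 1) = p w + w - 1 - 1 / p, both increasing in p and w. *)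
  assert (Hs : p ^ 2 * (u + 1) - 1 = p * w - 1) by (unfold w; ring).
  assert (Hs' : p' ^ 2 * (u' + 1) - 1 = p' * w' - 1) by (unfold w'; ring).
  unfold dominated, Phi; cbn [fst snd]; rewrite Hs, Hs'.
  assert (Hx : (p * w - 1) * (/ p + 1) = p * w + w - 1 - / p) by (field; lra).
  assert (Hx' : (p' * w' - 1) * (/ p' + 1) = p' * w' + w' - 1 - / p')
    by (field; lra).
  rewrite Hx, Hx'; split; nra.
Qed.

Lemma preimage_up_closed (S : R * R -> Prop) :
  up_closed S -> up_closed (fun z => Phi_preimage S z /\ D0 z).
Proof.
  intros HS z z' [[_ HPhi] H0] Hdom.
  assert (H0' : D0 z') by exact (D0_up_closed z z' H0 Hdom).
  split; [split|]; [destruct H0'; lra | | exact H0'].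
  exact (HS _ _ HPhi (Phi_monotone z z' H0 Hdom)).
Qed.

Lemma cube_diff_quotient_le (x1 x x2 : R) :
  0 < x1 -> x1 <= x -> x <= x2 ->
  (x ^ 2 + x * x1 + x1 ^ 2) * (1 + x2) <= (x2 ^ 2 + x2 * x1 + x1 ^ 2) * (1 + x).
Proof.
  intros hx1 hx1x hxx2.
  assert (Hdiff : (x2 ^ 2 + x2 * x1 + x1 ^ 2) * (1 + x)
                  - (x ^ 2 + x * x1 + x1 ^ 2) * (1 + x2)
                  = (x2 - x) * (x2 + x + x1 + (x * x2 - x1 ^ 2))) by ring.
  assert (0 <= x * x2 - x1 ^ 2) by nra.
  assert (0 <= (x2 - x) * (x2 + x + x1 + (x * x2 - x1 ^ 2)))
    by (apply Rmult_le_pos; lra).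
  lra.
Qed.

Lemma cube_weighted_mean_bound (a x1 x2 x v1 v2 V : R) :
  0 < x1 -> x1 <= x2 -> 0 <= a <= 1 -> 0 <= v2 ->
  x = a * x1 + (1 - a) * x2 ->
  V * x ^ 3 = a * v1 * x1 ^ 3 + (1 - a) * v2 * x2 ^ 3 ->
  V < a * v1 + (1 - a) * v2 ->
  v2 * (1 + x2) < V * (1 + x).
Proof.
  intros hx1 hx12 ha hv2 hx Hcube HV.
  assert (hx1x : x1 <= x) by nra.
  assert (hxx2 : x <= x2) by nra.
  set (P := x2 ^ 2 + x2 * x1 + x1 ^ 2); set (Q := x ^ 2 + x * x1 + x1 ^ 2).
  assert (HQ : 0 < Q) by (unfold Q; nra).
  (* x^3 - x1^3 and (1 - a) (x2^3 - x1^3) both carry the factor x - x1. *)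
  assert (Hfactor : (x - x1) * (V * Q - v2 * P) = x1 ^ 3 * (a * v1 + (1 - a) * v2 - V))
    by (unfold P, Q; subst x; lra).
  assert (Hpos : 0 < x1 ^ 3 * (a * v1 + (1 - a) * v2 - V))
    by (apply Rmult_lt_0_compat; [apply pow_lt |]; lra).
  assert (HPQ : v2 * P < V * Q) by nra.
  pose proof (cube_diff_quotient_le x1 x x2 hx1 hx1x hxx2) as Hratio.
  fold P Q in Hratio.
  apply (Rmult_lt_reg_l Q); [exact HQ |].
  nra.
Qed.

Lemma harmonic_weight (p1 p2 t p mu : R) :
  0 < p1 -> 0 < p2 -> 0 <= t <= 1 ->
  p = t * p1 + (1 - t) * p2 -> mu = t * p1 / p ->
  0 <= mu <= 1 /\ 1 - mu = (1 - t) * p2 / p /\ mu * / p1 + (1 - mu) * / p2 = / p.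
Proof.
  intros hp1 hp2 ht hp hmu.
  assert (hp0 : 0 < p) by (subst p; destruct (Rle_dec p1 p2); nra).
  assert (hinv : 0 < / p) by (apply Rinv_0_lt_compat; lra).
  assert (h1mu : 1 - mu = (1 - t) * p2 / p) by (subst mu p; field; lra).
  split; [| split; [exact h1mu |]].
  - assert (0 <= t * p1 / p) by (apply Rmult_le_pos; nra).
    assert (0 <= (1 - t) * p2 / p) by (apply Rmult_le_pos; nra).
    lra.
  - rewrite h1mu; subst mu p; field; lra.
Qed.

Lemma Phi_comb_dominates_ordered (p1 u1 p2 u2 t : R) :
  D0 (p1, u1) -> D0 (p2, u2) -> p2 <= p1 -> 0 <= t <= 1 ->
  exists mu, 0 <= mu <= 1 /\
    dominated (comb mu (Phi (p1, u1)) (Phi (p2, u2))) (Phi (comb t (p1, u1) (p2, u2))).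
Proof.
  intros H1 H2 h12 ht.
  destruct (D0_convex _ _ H1 H2 t ht) as [hp hu].
  destruct H1 as [hp1 hu1], H2 as [hp2 hu2].
  unfold comb, Phi; cbn [fst snd] in *.
  set (p := t * p1 + (1 - t) * p2) in *; set (u := t * u1 + (1 - t) * u2) in *.
  set (mu := t * p1 / p).
  destruct (harmonic_weight p1 p2 t p mu hp1 hp2 ht eq_refl eq_refl)
    as (hmu & h1mu & Hharm).
  assert (Hcube : p ^ 2 * (u + 1) * (/ p) ^ 3
                  = mu * (p1 ^ 2 * (u1 + 1)) * (/ p1) ^ 3
                    + (1 - mu) * (p2 ^ 2 * (u2 + 1)) * (/ p2) ^ 3)
    by (rewrite h1mu; unfold mu, u; field; lra).
  assert (hinv : 0 < / p) by (apply Rinv_0_lt_compat; lra).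
  destruct (Rle_lt_dec (mu * (p1 ^ 2 * (u1 + 1)) + (1 - mu) * (p2 ^ 2 * (u2 + 1)))
                       (p ^ 2 * (u + 1))) as [Hge | Hlt].
  - exists mu; split; [exact hmu |].
    unfold dominated; cbn [fst snd]; rewrite Hharm.
    split; [lra | apply Rmult_le_compat_r; lra].
  - exists 0; split; [lra |].
    unfold dominated; cbn [fst snd].
    rewrite !Rmult_0_l, !Rminus_0_r, !Rmult_1_l, !Rplus_0_l.
    assert (hinv12 : / p1 <= / p2) by (apply Rinv_le_contravar; lra).
    assert (Hdom : p2 ^ 2 * (u2 + 1) * (1 + / p2) < p ^ 2 * (u + 1) * (1 + / p)).
    { apply (cube_weighted_mean_bound mu (/ p1) (/ p2)) with (v1 := p1 ^ 2 * (u1 + 1));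
        try lra; [apply Rinv_0_lt_compat; lra | nra]. }
    assert (hxx2 : / p <= / p2).
    { assert (0 <= mu * (/ p2 - / p1)) by (apply Rmult_le_pos; lra).
      rewrite <- Hharm; lra. }
    assert (Hv : p2 ^ 2 * (u2 + 1) <= p ^ 2 * (u + 1)).
    { assert (0 <= p ^ 2 * (u + 1)) by (apply Rmult_le_pos; [apply pow2_ge_0 | lra]).
      apply (Rmult_le_reg_r (1 + / p2)); [lra | nra]. }
    split; lra.
Qed.

Lemma Phi_comb_dominates (z1 z2 : R * R) (t : R) :
  D0 z1 -> D0 z2 -> 0 <= t <= 1 ->
  exists mu, 0 <= mu <= 1 /\ dominated (comb mu (Phi z1) (Phi z2)) (Phi (comb t z1 z2)).
Proof.
  destruct z1 as [p1 u1], z2 as [p2 u2]; intros H1 H2 ht.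
  destruct (Rle_lt_dec p2 p1) as [h12 | h21].
  - exact (Phi_comb_dominates_ordered p1 u1 p2 u2 t H1 H2 h12 ht).
  - destruct (Phi_comb_dominates_ordered p2 u2 p1 u1 (1 - t) H2 H1 ltac:(lra) ltac:(lra))
      as [mu [hmu Hdom]].
    exists (1 - mu); split; [lra |].
    rewrite comb_swap, (comb_swap t).
    replace (1 - (1 - mu)) with mu by ring.
    exact Hdom.
Qed.

Lemma preimage_convex (S : R * R -> Prop) :
  convex_set S -> up_closed S -> convex_set (fun z => Phi_preimage S z /\ D0 z).
Proof.
  intros HC HU z1 z2 [[_ HS1] H1] [[_ HS2] H2] t ht.
  change (Phi_preimage S (comb t z1 z2) /\ D0 (comb t z1 z2)).
  assert (H : D0 (comb t z1 z2)) by exact (D0_convex z1 z2 H1 H2 t ht).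
  split; [split |]; [destruct H; lra | | exact H].
  destruct (Phi_comb_dominates z1 z2 t H1 H2 ht) as [mu [hmu Hdom]].
  exact (HU _ _ (HC _ _ HS1 HS2 mu hmu) Hdom).
Qed.

Lemma Dn_up_closed (n : nat) : up_closed (Dn n).
Proof.
  induction n as [| n IH]; [exact D0_up_closed | exact (preimage_up_closed _ IH)].
Qed.

Theorem proposition2 : forall n : nat, convex_set (Dn n).
Proof.
  induction n as [| n IH].
  - exact D0_convex.
  - exact (preimage_convex _ IH (Dn_up_closed n)).
Qed.
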